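(* Let $s\ge1$, $\theta\in\{0,1\}^s$, and suppose $f\in C^{|\theta|+1}(\mathbb{R}^s)$. Then for every $\alpha\in\mathbb{Z}^s$, $$\lim_{n\to\infty}\left|(-1)^{|\theta|}\,2^{(n+2)|\theta|+ns/2}\,d_{\theta,\alpha}^n(f)-\frac{D^\theta f\left(x_\alpha^n\right)}{\theta!}\right|=0.$$
   Context: Univariate Haar functions: $\psi_0:=\chi_{[0,1]}$ and $\psi_1:=\chi_{[0,\frac12]}-\chi_{[\frac12,1]}$. For $\theta\in\{0,1\}^s$ and $x\in\mathbb{R}^s$, $\psi_\theta(x):=\prod_{j=1}^s\psi_{\theta_j}(x_j)$. For $n\in\mathbb{N}_0$, $\alpha\in\mathbb{Z}^s$ the Haar coefficients are $d_{\theta,\alpha}^n(f):=2^{ns/2}\int_{\mathbb{R}^s}f(t)\,\psi_\theta(2^nt-\alpha)\,dt$. Let $\epsilon:=(1,\dots,1)\in\mathbb{Z}^s$ and $x_\alpha^n:=2^{-n}(\alpha+\frac12\epsilon)$. Multi-index notation: $|\theta|=\sum_j\theta_j$, $\theta!=\prod_j\theta_j!$, $D^\theta=\partial^{|\theta|}/\partial x_1^{\theta_1}\cdots\partial x_s^{\theta_s}$. *)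

From HB Require Import structures.
From mathcomp Require Import all_boot all_order all_algebra.
From mathcomp Require Import all_classical all_reals all_analysis.
Set Implicit Arguments. Unset Strict Implicit. Unset Printing Implicit Defensive.
Import Order.TTheory GRing.Theory Num.Theory.
Import numFieldNormedType.Exports.
Local Open Scope classical_set_scope.
Local Open Scope ring_scope.

Section HaarDefs.
Variable R : realType.

Definition evec (s : nat) (j : 'I_s) : 'rV[R]_s := delta_mx 0 j.

Definition partial (s : nat) (j : 'I_s) (g : 'rV[R]_s -> R) : 'rV[R]_s -> R :=
  fun x => 'D_(evec j) g x.

Definition Dseq (s : nat) (js : seq 'I_s) (g : 'rV[R]_s -> R) : 'rV[R]_s -> R :=
  foldr (@partial s) g js.

Definition Ck (s k : nat) (g : 'rV[R]_s -> R) : Prop :=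
  forall js : seq 'I_s, (size js <= k)%N ->
    continuous (Dseq js g) /\
    ((size js < k)%N -> forall (j : 'I_s) (x : 'rV[R]_s), derivable (Dseq js g) x (evec j)).

Definition mabs (s : nat) (theta : 'I_s -> bool) : nat := (\sum_(j < s) nat_of_bool (theta j))%N.
Definition mfact (s : nat) (theta : 'I_s -> bool) : nat := (\prod_(j < s) (nat_of_bool (theta j))`!)%N.

Definition Dtheta (s : nat) (theta : 'I_s -> bool) (g : 'rV[R]_s -> R) : 'rV[R]_s -> R :=
  Dseq [seq j <- enum 'I_s | theta j] g.

Definition ind01 (a b x : R) : R := if (a <= x) && (x <= b) then 1 else 0.
Definition psi (b : bool) (x : R) : R :=
  if b then ind01 0 (1/2) x - ind01 (1/2) 1 x else ind01 0 1 x.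

Definition psi_theta (s : nat) (theta : 'I_s -> bool) (x : 'rV[R]_s) : R :=
  \prod_(j < s) psi (theta j) (x ord0 j).

(* Lebesgue integral over R^s, realized as the iterated integral of
   one-dimensional Lebesgue integrals (equal to the integral w.r.t. the
   s-dimensional Lebesgue measure for integrable f, by Fubini). *)
Fixpoint intRn (s : nat) : ('rV[R]_s -> R) -> R :=
  match s with
  | 0 => fun g => g 0
  | s'.+1 => fun g =>
      (\int[@lebesgue_measure R]_(t in [set: R])
         intRn (fun y : 'rV[R]_s' => g (row_mx (t%:M : 'rV[R]_1) y)))%R
  end.

Definition rvZ (s : nat) (alpha : 'I_s -> int) : 'rV[R]_s := \row_j (alpha j)%:~R.

Definition haar_coef (s : nat) (theta : 'I_s -> bool) (n : nat) (alpha : 'I_s -> int)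
  (f : 'rV[R]_s -> R) : R :=
  (2 : R) `^ ((n * s)%:R / 2) *
  intRn (fun t : 'rV[R]_s => f t * psi_theta theta ((2 : R) ^+ n *: t - rvZ alpha)).

Definition xpt (s : nat) (n : nat) (alpha : 'I_s -> int) : 'rV[R]_s :=
  ((2 : R) ^+ n)^-1 *: (rvZ alpha + \row_(j < s) (1 / 2 : R)).

End HaarDefs.

(* After the substitution t = 2^-n (u + alpha), a factor psi_1 of the Haar
   function turns integration in its variable into the integral of a difference
   g(y) - g(y + h e_j), h = 2^-(n+1), over an interval of length h, and a factor
   psi_0 into an integral over an interval of length 2h.  So, up to 2^(ns/2),
   d^n_{theta,alpha}(f) is the integral of the iterated difference
   Delta_h^theta f over a box B_n, and the mean value theorem, applied once per
   direction, gives Delta_h^theta f(y) = (-h)^|theta| D^theta f(z) with z within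
   |theta| h of y.  The normalising factor of the theorem times 2^(ns/2) is
   exactly 1 / ((-h)^|theta| vol B_n), so the normalised coefficient is an
   average of values of D^theta f at points which, like x^n_alpha, tend to 0 as
   n grows; continuity of D^theta f at 0 concludes.  Finally theta! = 1 as theta
   is 0/1-valued. *)

From HB Require Import structures.
From mathcomp Require Import all_boot all_order all_algebra.
From mathcomp Require Import all_classical all_reals all_analysis.
From mathcomp Require Import ring lra.
Import Order.TTheory GRing.Theory Num.Theory.
Import numFieldNormedType.Exports.
Local Open Scope classical_set_scope.
Local Open Scope ring_scope.

Set Implicit Arguments. Unset Strict Implicit. Unset Printing Implicit Defensive.

Section IntervalIntegral.
Variable R : realType.
Notation mu := (@lebesgue_measure R).

Lemma Rintegral_mul_ind01 (G : R -> R) (l u : R) :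
  (\int[mu]_(t in [set: R]) (G t * ind01 l u t))%R = (\int[mu]_(t in `[l, u]) G t)%R.
Proof.
rewrite [RHS]Rintegral_mkcond; apply: eq_Rintegral => t _.
by rewrite patchE /ind01 mem_setE in_itv /=; case: ifP; rewrite ?mulr1 ?mulr0.
Qed.

Lemma continuous_integrable_itv (G : R -> R) (l u : R) :
  continuous G -> mu.-integrable `[l, u] (EFin \o G).
Proof.
move=> cG; apply: continuous_compact_integrable; first exact: segment_compact.
exact: continuous_subspaceT.
Qed.

Lemma integrable_mul_ind01 (G : R -> R) (l u : R) : continuous G ->
  mu.-integrable [set: R] (EFin \o (fun t => G t * ind01 l u t)).
Proof.
move=> cG; have -> : EFin \o (fun t => G t * ind01 l u t) = (EFin \o G) \_ `[l, u].
  apply: funext => t; rewrite restrict_EFin /= patchE /ind01 mem_setE in_itv /=.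
  by case: ifP; rewrite ?mulr1 ?mulr0.
by apply/(integrable_mkcond _ _).1 => //; exact: continuous_integrable_itv.
Qed.

Lemma Rintegral_itv_scaleD (G1 G2 : R -> R) (a l u : R) :
  continuous G1 -> continuous G2 ->
  (\int[mu]_(t in `[l, u]) (a * G1 t + G2 t))%R =
  a * (\int[mu]_(t in `[l, u]) G1 t)%R + (\int[mu]_(t in `[l, u]) G2 t)%R.
Proof.
move=> c1 c2; rewrite RintegralD //; last exact: continuous_integrable_itv.
  by rewrite RintegralZl //; exact: continuous_integrable_itv.
by apply: continuous_integrable_itv => x; apply: continuousM (c1 x); exact: cst_continuous.
Qed.

Lemma Rintegral_itv_cst (c l u : R) : l <= u ->
  (\int[mu]_(t in `[l, u]) c)%R = c * (u - l).
Proof.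
move=> lu; rewrite Rintegral_cst //= lebesgue_measure_itv /= lte_fin.
by case: ltgtP lu => // -> _; rewrite subrr mulr0.
Qed.

Lemma Rintegral_itv_le (G : R -> R) (M l u : R) : l <= u -> continuous G ->
  (forall t, l <= t <= u -> `|G t| <= M) ->
  `|(\int[mu]_(t in `[l, u]) G t)%R| <= M * (u - l).
Proof.
move=> lu cG GM; rewrite -Rintegral_itv_cst //.
apply: le_trans (le_normr_Rintegral _ _) _ => //; first exact: continuous_integrable_itv.
apply: le_Rintegral => //.
- by apply: continuous_integrable_itv => x; apply: continuous_comp (cG x) _; exact: norm_continuous.
- by apply: continuous_integrable_itv => x; exact: cvg_cst.
Qed.

Lemma Rintegral_itv_shift (G : R -> R) (l u d : R) : l <= u -> continuous G ->
  (\int[mu]_(t in `[l + d, u + d]) G t)%R = (\int[mu]_(t in `[l, u]) G (t + d))%R.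
Proof.
move=> lu cG; pose F x : R := x + d.
have F'E : F^`()%classic = cst 1.
  by apply: funext => x; rewrite derive1E deriveD // derive_id derive_cst addr0.
have cF : continuous F by move=> x; apply: continuousD => //; exact: cvg_cst.
have F_incr : {in `[l, u] &, {homo F : x y / x < y}} by move=> x y _ _; rewrite ltrD2r.
have dF : derivable_oo_LRcontinuous F l u.
  split; [by move=> x _; apply: derivableD | exact/cvg_at_right_filter/cF |
          exact/cvg_at_left_filter/cF].
rewrite /Rintegral -[l + d]/(F l) -[u + d]/(F u).
rewrite (integration_by_substitution_increasing lu F_incr) ?F'E //.
- by congr fine; apply: eq_integral => x _ /=; rewrite mulr1.
- by move=> x _; exact: cvg_cst.
- exact: is_cvg_cst.
- exact: is_cvg_cst.
- exact: continuous_subspaceT.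
Qed.

End IntervalIntegral.

Local Notation vcons t y := (row_mx (t%:M : 'rV_1) y).

Definition ftail T s (f : 'I_s.+1 -> T) : 'I_s -> T := fun j => f (lift ord0 j).

Section BoxIntegral.
Variable R : realType.
Notation mu := (@lebesgue_measure R).

Lemma vcons0 s (t : R) (y : 'rV[R]_s) : vcons t y ord0 ord0 = t.
Proof.
have -> : (ord0 : 'I_s.+1) = lshift s (ord0 : 'I_1) by apply: val_inj.
by rewrite (@row_mxEl _ 1 1 s) mxE.
Qed.

Lemma vconsS s (t : R) (y : 'rV[R]_s) j : vcons t y ord0 (lift ord0 j) = y ord0 j.
Proof.
have -> : (lift ord0 j : 'I_s.+1) = rshift 1 j by apply: val_inj.
by rewrite (@row_mxEr _ 1 1 s).
Qed.

Lemma continuous_vcons_ball s (g : 'rV[R]_s.+1 -> R) (t0 : R) (y0 : 'rV[R]_s) (eps : R) :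
  continuous g -> 0 < eps -> exists2 e : R, 0 < e &
  forall (t : R) (y : 'rV[R]_s), `|t0 - t| < e -> (forall j, `|y0 ord0 j - y ord0 j| < e) ->
  `|g (vcons t0 y0) - g (vcons t y)| < eps.
Proof.
move=> cg eps0; have /cvgrPdist_lt/(_ eps eps0)/nbhs_ballP[e e0 ge] := cg (vcons t0 y0).
exists e => // t y et ey; apply: ge; split => // i j.
rewrite (ord1 i); case: (@split_ordP 1 s j) => k ->.
  by rewrite (ord1 k) !(@row_mxEl _ 1 1 s) !mxE.
by rewrite !(@row_mxEr _ 1 1 s); exact: ey.
Qed.

Lemma continuous_slice s (g : 'rV[R]_s.+1 -> R) (t : R) :
  continuous g -> continuous (fun y : 'rV[R]_s => g (vcons t y)).
Proof.
move=> cg y0; apply/(@cvgrPdist_lt _ _ _ (nbhs y0) (nbhs_filter y0)) => eps eps0.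
have [e e0 ge] := continuous_vcons_ball t y0 cg eps0.
apply/nbhs_ballP; exists e => // y [_ ey]; apply: ge => [|j]; last exact: ey.
by rewrite subrr normr0.
Qed.

(* Tube lemma for the compact box. *)
Lemma near_slice_unif s (g : 'rV[R]_s.+1 -> R) (lo hi : 'I_s -> R) (t0 eps : R) :
  continuous g -> 0 < eps ->
  \forall t \near t0, forall y : 'rV[R]_s, (forall j, lo j <= y ord0 j <= hi j) ->
    `|g (vcons t0 y) - g (vcons t y)| < eps.
Proof.
move=> cg eps0.
pose K := [set y : 'rV[R]_s | forall j, `[lo j, hi j]%classic (y ord0 j)].
have cK : compact K.
  by apply: (@rV_compact _ s (fun j => `[lo j, hi j]%classic)) => j; exact: segment_compact.
pose P t y := `|g (vcons t0 y) - g (vcons t y)| < eps.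
have PK : forall y0, K y0 -> \forall y \near y0 & t \near nbhs t0, P t y.
  move=> y0 _; have eps20 : 0 < eps / 2 by rewrite divr_gt0.
  have [e e0 ge] := continuous_vcons_ball t0 y0 cg eps20.
  exists (ball y0 e, ball t0 e) => /=; first by split; exact: nbhsx_ballx.
  case=> y t /= [[_ ey] et].
  have ey' j : `|y0 ord0 j - y ord0 j| < e := ey ord0 j.
  have := ge t0 y; rewrite subrr normr0 => /(_ e0 ey') g0.
  have gt := ge t y et ey'.
  rewrite /P -(subrKA (g (vcons t0 y0))) addrC -opprB.
  by apply: le_lt_trans (ler_normB _ _) _; rewrite (splitr eps) ltrD.
have PK_unif : \forall t \near t0, K `<=` P t.
  exact: (compact_near_coveringP K).1 cK R (nbhs t0) P _ PK.
apply: filterS PK_unif => t Kt y yK; apply: Kt => j; rewrite /= in_itv; exact: yK.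
Qed.

Definition ind_box s (lo hi : 'I_s -> R) (y : 'rV[R]_s) : R :=
  \prod_(j < s) ind01 (lo j) (hi j) (y ord0 j).

Definition box_vol s (lo hi : 'I_s -> R) : R := \prod_(j < s) (hi j - lo j).

Definition box_integral s (g : 'rV[R]_s -> R) (lo hi : 'I_s -> R) : R :=
  intRn (fun y => g y * ind_box lo hi y).

Lemma ind_box_vcons s (lo hi : 'I_s.+1 -> R) (t : R) (y : 'rV[R]_s) :
  ind_box lo hi (vcons t y) = ind01 (lo ord0) (hi ord0) t * ind_box (ftail lo) (ftail hi) y.
Proof.
rewrite /ind_box big_ord_recl vcons0; congr (_ * _).
by apply: eq_bigr => j _; rewrite vconsS.
Qed.

Lemma box_volS s (lo hi : 'I_s.+1 -> R) :
  box_vol lo hi = (hi ord0 - lo ord0) * box_vol (ftail lo) (ftail hi).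
Proof. by rewrite /box_vol big_ord_recl. Qed.

Lemma box_vol_ge0 s (lo hi : 'I_s -> R) : (forall j, lo j <= hi j) -> 0 <= box_vol lo hi.
Proof. by move=> lohi; apply: prodr_ge0 => j _; rewrite subr_ge0. Qed.

Lemma vcons_in_box s (lo hi : 'I_s.+1 -> R) (t : R) (y : 'rV[R]_s) :
  lo ord0 <= t <= hi ord0 -> (forall j, ftail lo j <= y ord0 j <= ftail hi j) ->
  forall j, lo j <= vcons t y ord0 j <= hi j.
Proof.
by move=> t_in y_in j; case: (unliftP ord0 j) => [j'|] ->; rewrite ?vconsS ?vcons0 //; apply: y_in.
Qed.

(* Proved simultaneously by induction on [s]: continuity of the slice integrals
   in dimension [s.+1] needs linearity and the bound in dimension [s]. *)
Definition box_integral_laws s : Prop :=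
  forall lo hi : 'I_s -> R, (forall j, lo j <= hi j) ->
  [/\ forall (g1 g2 : 'rV[R]_s -> R) (a : R), continuous g1 -> continuous g2 ->
        box_integral (fun y => a * g1 y + g2 y) lo hi =
        a * box_integral g1 lo hi + box_integral g2 lo hi,
      forall c : R, box_integral (fun=> c) lo hi = c * box_vol lo hi &
      forall (g : 'rV[R]_s -> R) (M : R), continuous g ->
        (forall y : 'rV[R]_s, (forall j, lo j <= y ord0 j <= hi j) -> `|g y| <= M) ->
        `|box_integral g lo hi| <= M * box_vol lo hi].

Lemma box_integral_laws0 : box_integral_laws 0.
Proof.
move=> lo hi _; rewrite /box_integral /box_vol /ind_box /= !big_ord0.
split=> [g1 g2 a _ _|c|g M _ gM]; rewrite !mulr1 //.
by apply: gM => -[].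
Qed.

Definition slice_integral s (g : 'rV[R]_s.+1 -> R) (lo hi : 'I_s.+1 -> R) (t : R) : R :=
  box_integral (fun y => g (vcons t y)) (ftail lo) (ftail hi).

Lemma continuous_scale (T : topologicalType) (g : T -> R) (a : R) :
  continuous g -> continuous (fun y => a * g y).
Proof. by move=> cg y; apply: continuousM (cg y); exact: cst_continuous. Qed.

Lemma continuous_scaleD (T : topologicalType) (g1 g2 : T -> R) (a : R) :
  continuous g1 -> continuous g2 -> continuous (fun y => a * g1 y + g2 y).
Proof. by move=> c1 c2 y; apply: continuousD (c2 y); exact: continuous_scale. Qed.

Section Step.
Variable s : nat.
Hypothesis laws : box_integral_laws s.

Lemma continuous_slice_integral (lo hi : 'I_s.+1 -> R) (g : 'rV[R]_s.+1 -> R) :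
  (forall j, lo j <= hi j) -> continuous g -> continuous (slice_integral g lo hi).
Proof.
move=> lohi cg t0; apply/cvgrPdist_le => eps eps0.
have lohi' j : ftail lo j <= ftail hi j := lohi (lift ord0 j).
have [lin _ bound] := laws lohi'.
set V := box_vol (ftail lo) (ftail hi).
have V1 : 0 < V + 1 by rewrite ltr_wpDl // box_vol_ge0.
have e0 : 0 < eps / (V + 1) by rewrite divr_gt0.
apply: filterS (near_slice_unif (ftail lo) (ftail hi) t0 cg e0) => t gt.
have -> : slice_integral g lo hi t0 - slice_integral g lo hi t =
    box_integral (fun y => (-1) * g (vcons t y) + g (vcons t0 y)) (ftail lo) (ftail hi).
  by rewrite lin ?mulN1r 1?addrC //; exact: continuous_slice.
apply: le_trans (bound _ (eps / (V + 1)) _ _) _.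
- by apply: continuous_scaleD; exact: continuous_slice.
- by move=> y y_in; rewrite mulN1r addrC ltW // gt.
- by rewrite -/V -{2}(divfK (lt0r_neq0 V1) eps) ler_pM2l // lerDl.
Qed.

Lemma box_integralS (lo hi : 'I_s.+1 -> R) (g : 'rV[R]_s.+1 -> R) :
  (forall j, lo j <= hi j) -> continuous g ->
  box_integral g lo hi = (\int[mu]_(t in `[lo ord0, hi ord0]) slice_integral g lo hi t)%R.
Proof.
move=> lohi cg; have [lin cst _] := laws (fun j => lohi (lift ord0 j)).
rewrite /box_integral /= -Rintegral_mul_ind01; apply: eq_Rintegral => t _.
rewrite /slice_integral -[RHS]addr0 -[X in _ + X](mul0r (box_vol (ftail lo) (ftail hi))) -cst.
rewrite mulrC -lin; [|exact: continuous_slice|exact: cst_continuous].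
by congr intRn; apply: funext => y; rewrite ind_box_vcons addr0; ring.
Qed.

Lemma box_integral_lawsS : box_integral_laws s.+1.
Proof.
move=> lo hi lohi; have [lin cst bound] := laws (fun j => lohi (lift ord0 j)).
have c_slice := continuous_slice_integral lohi.
split.
- move=> g1 g2 a c1 c2; rewrite !(box_integralS lohi) //; last exact: continuous_scaleD.
  rewrite -Rintegral_itv_scaleD; [|exact: c_slice|exact: c_slice].
  apply: eq_Rintegral => t _.
  by rewrite /slice_integral lin //; exact: continuous_slice.
- move=> c; rewrite (box_integralS lohi); last exact: cst_continuous.
  rewrite /slice_integral; under eq_Rintegral do rewrite cst.
  by rewrite Rintegral_itv_cst // box_volS; ring.
- move=> g M cg gM; rewrite (box_integralS lohi) // box_volS mulrCA mulrC.
  apply: Rintegral_itv_le => [||t t_in]; [exact: lohi | exact: c_slice |].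
  apply: bound => [|y y_in]; first exact: continuous_slice.
  exact/gM/vcons_in_box.
Qed.

End Step.

Lemma box_integral_laws_all s : box_integral_laws s.
Proof. by elim: s => [|s IH]; [exact: box_integral_laws0 | exact: box_integral_lawsS]. Qed.

Section Laws.
Variables (s : nat) (lo hi : 'I_s -> R).
Hypothesis lohi : forall j, lo j <= hi j.

Lemma box_integralZD (g1 g2 : 'rV[R]_s -> R) (a : R) :
  continuous g1 -> continuous g2 ->
  box_integral (fun y => a * g1 y + g2 y) lo hi =
  a * box_integral g1 lo hi + box_integral g2 lo hi.
Proof. by have [lin _ _] := box_integral_laws_all lohi; exact: lin. Qed.

Lemma box_integral_cst (c : R) : box_integral (fun=> c) lo hi = c * box_vol lo hi.
Proof. by have [_ cst _] := box_integral_laws_all lohi; exact: cst. Qed.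

Lemma box_integral_le (g : 'rV[R]_s -> R) (M : R) : continuous g ->
  (forall y : 'rV[R]_s, (forall j, lo j <= y ord0 j <= hi j) -> `|g y| <= M) ->
  `|box_integral g lo hi| <= M * box_vol lo hi.
Proof. by have [_ _ bound] := box_integral_laws_all lohi; exact: bound. Qed.

Lemma box_integralZ (g : 'rV[R]_s -> R) (a : R) : continuous g ->
  box_integral (fun y => a * g y) lo hi = a * box_integral g lo hi.
Proof.
move=> cg; rewrite -[RHS]addr0 -(mul0r (box_vol lo hi)) -box_integral_cst -box_integralZD //.
  by congr box_integral; apply: funext => y; rewrite addr0.
exact: cst_continuous.
Qed.

Lemma box_integralB (g1 g2 : 'rV[R]_s -> R) : continuous g1 -> continuous g2 ->
  box_integral (fun y => g1 y - g2 y) lo hi = box_integral g1 lo hi - box_integral g2 lo hi.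
Proof.
move=> c1 c2; rewrite addrC -mulN1r -box_integralZD //.
by congr box_integral; apply: funext => y; rewrite mulN1r addrC.
Qed.

End Laws.

End BoxIntegral.

Section FiniteDifferences.
Variable R : realType.

Definition fdiff s (d : R) (j : 'I_s) (G : 'rV[R]_s -> R) : 'rV[R]_s -> R :=
  fun y => G y - G (y + d *: evec R j).

Definition fdiffs s (d : R) (js : seq 'I_s) (g : 'rV[R]_s -> R) : 'rV[R]_s -> R :=
  foldr (fdiff d) g js.

Lemma continuous_shift (V : normedModType R) (T : topologicalType) (G : V -> T) (v : V) :
  continuous G -> continuous (fun y : V => G (y + v)).
Proof.
move=> cG y; apply: continuous_comp; last exact: cG.
by apply: (@cvgD _ _ _ (nbhs y) (nbhs_filter y)); [exact: cvg_id | exact: cvg_cst].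
Qed.

Lemma continuous_fdiffs s d js (g : 'rV[R]_s -> R) :
  continuous g -> continuous (fdiffs d js g).
Proof.
move=> cg; elim: js => [|j js IH] //= y; apply: continuousD (IH y) _.
exact/continuousN/continuous_shift.
Qed.

Lemma fdiffsZ s d js (g : 'rV[R]_s -> R) (a : R) :
  fdiffs d js (fun y => a * g y) = (fun y => a * fdiffs d js g y).
Proof. by elim: js => [|j js IH] //=; apply: funext => y; rewrite /fdiff IH /=; ring. Qed.

Lemma vcons_shiftS s (t d : R) (y : 'rV[R]_s) j :
  vcons t y + d *: evec R (lift ord0 j) = vcons t (y + d *: evec R j).
Proof.
apply/rowP => k; rewrite [LHS]mxE [X in _ + X]mxE /evec [X in _ + _ * X]mxE.
case: (unliftP ord0 k) => [k'|] ->; rewrite ?vconsS ?vcons0 ?mxE.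
  by rewrite (inj_eq (@lift_inj _ ord0)).
by rewrite (negbTE (neq_lift _ _)) andbF mulr0 addr0.
Qed.

Lemma vcons_shift0 s (t d : R) (y : 'rV[R]_s) :
  vcons t y + d *: evec R ord0 = vcons (t + d) y.
Proof.
apply/rowP => k; rewrite [LHS]mxE [X in _ + X]mxE /evec [X in _ + _ * X]mxE.
case: (unliftP ord0 k) => [k'|] ->; rewrite ?vconsS ?vcons0.
  by rewrite eq_sym (negbTE (neq_lift _ _)) andbF mulr0 addr0.
by rewrite eqxx mulr1.
Qed.

Lemma fdiffs_vcons s d (js : seq 'I_s) (g : 'rV[R]_s.+1 -> R) (t : R) (y : 'rV[R]_s) :
  fdiffs d (map (lift ord0) js) g (vcons t y) = fdiffs d js (fun z => g (vcons t z)) y.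
Proof. by elim: js y => [|j js IH] y //=; rewrite /fdiff vcons_shiftS !IH. Qed.

End FiniteDifferences.

Section HaarDecomposition.
Variable R : realType.
Notation mu := (@lebesgue_measure R).

Definition haar_width (b : bool) (d : R) : R := if b then d else d + d.

(* [psi b] rescaled to the interval [l, l + 2 d]. *)
Definition haar1 (b : bool) (l d t : R) : R :=
  if b then ind01 l (l + d) t - ind01 (l + d) (l + d + d) t
  else ind01 l (l + (d + d)) t.

Definition haar_prod s (theta : 'I_s -> bool) (lo : 'I_s -> R) (d : R) (y : 'rV[R]_s) : R :=
  \prod_(j < s) haar1 (theta j) (lo j) d (y ord0 j).

Definition haar_hi s (theta : 'I_s -> bool) (lo : 'I_s -> R) (d : R) (j : 'I_s) : R :=
  lo j + haar_width (theta j) d.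

Definition theta_seq s (theta : 'I_s -> bool) : seq 'I_s := [seq j <- enum 'I_s | theta j].

Lemma theta_seqS s (theta : 'I_s.+1 -> bool) :
  theta_seq theta = if theta ord0 then ord0 :: map (lift ord0) (theta_seq (ftail theta))
                    else map (lift ord0) (theta_seq (ftail theta)).
Proof. by rewrite /theta_seq enum_ordSl /= filter_map; case: ifP. Qed.

Lemma haar_prod_vcons s theta lo d (t : R) (y : 'rV[R]_s) :
  haar_prod theta lo d (vcons t y) =
  haar1 (theta ord0) (lo ord0) d t * haar_prod (ftail theta) (ftail lo) d y.
Proof.
rewrite /haar_prod big_ord_recl vcons0; congr (_ * _).
by apply: eq_bigr => j _; rewrite vconsS.
Qed.

Lemma haar_width_ge0 b (d : R) : 0 <= d -> 0 <= haar_width b d.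
Proof. by case: b => d0 //; rewrite addr_ge0. Qed.

Lemma Rintegral_mul_haar1 (Psi : R -> R) b (l d : R) : 0 <= d -> continuous Psi ->
  (\int[mu]_(t in [set: R]) (Psi t * haar1 b l d t))%R =
  (\int[mu]_(t in `[l, l + haar_width b d])
     (if b then Psi t - Psi (t + d) else Psi t))%R.
Proof.
move=> d0 cPsi; case: b; rewrite /haar1 /=; last exact: Rintegral_mul_ind01.
under eq_Rintegral do rewrite mulrBr.
rewrite RintegralB //; [|exact: integrable_mul_ind01|exact: integrable_mul_ind01].
rewrite !Rintegral_mul_ind01 Rintegral_itv_shift ?lerDl // RintegralB //.
- exact: continuous_integrable_itv.
- by apply/continuous_integrable_itv/continuous_shift.
Qed.

Lemma intRn_haar s (theta : 'I_s -> bool) (lo : 'I_s -> R) (d : R) (g : 'rV[R]_s -> R) :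
  0 <= d -> continuous g ->
  intRn (fun y => g y * haar_prod theta lo d y) =
  box_integral (fdiffs d (theta_seq theta) g) lo (haar_hi theta lo d).
Proof.
move=> d0; elim: s theta lo g => [|s IH] theta lo g cg.
  by rewrite /box_integral /haar_prod /ind_box /theta_seq enum_ord0 /= !big_ord0.
have lohi j : lo j <= haar_hi theta lo d j by rewrite lerDl haar_width_ge0.
have lohi' j : ftail lo j <= ftail (haar_hi theta lo d) j := lohi (lift ord0 j).
pose F := fdiffs d (map (lift ord0) (theta_seq (ftail theta))) g.
have cF : continuous F by exact: continuous_fdiffs.
pose Psi := slice_integral F lo (haar_hi theta lo d).
have cPsi : continuous Psi := continuous_slice_integral (@box_integral_laws_all R s) lohi cF.
have -> : intRn (fun y => g y * haar_prod theta lo d y) =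
    (\int[mu]_(t in [set: R]) (Psi t * haar1 (theta ord0) (lo ord0) d t))%R.
  apply: eq_Rintegral => t _.
  have cgt : continuous (fun y => g (vcons t y)) by exact: continuous_slice.
  transitivity (intRn (fun y =>
      haar1 (theta ord0) (lo ord0) d t * g (vcons t y) * haar_prod (ftail theta) (ftail lo) d y)).
    by congr intRn; apply: funext => y; rewrite haar_prod_vcons; ring.
  rewrite IH; last exact: continuous_scale.
  rewrite fdiffsZ box_integralZ; [|exact: lohi'|exact: continuous_fdiffs].
  rewrite [LHS]mulrC /Psi /slice_integral; congr (box_integral _ _ _ * _).
  by apply: funext => y; rewrite /F fdiffs_vcons.
have hi0 : haar_hi theta lo d ord0 = lo ord0 + haar_width (theta ord0) d by [].
rewrite Rintegral_mul_haar1 // (box_integralS (@box_integral_laws_all R s) lohi); last first.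
  exact: continuous_fdiffs.
rewrite theta_seqS hi0; case: (theta ord0) => //=; apply: eq_Rintegral => t _.
rewrite /Psi /slice_integral -box_integralB //; try exact: continuous_slice.
by congr box_integral; apply: funext => y; rewrite /fdiff vcons_shift0.
Qed.

End HaarDecomposition.

Section MeanValue.
Variable R : realType.

Lemma derive_shift s (G : 'rV[R]_s -> R) (w v x : 'rV[R]_s) :
  'D_v (fun y => G (y + w)) x = 'D_v G (x + w).
Proof. by rewrite /derive /comp /=; under eq_fun do rewrite -addrA. Qed.

Lemma derivable_shift s (G : 'rV[R]_s -> R) (w v x : 'rV[R]_s) :
  derivable G (x + w) v -> derivable (fun y => G (y + w)) x v.
Proof. by rewrite /derivable /comp /=; under eq_fun do rewrite addrA. Qed.

Lemma Dseq_shift s (js : seq 'I_s) (g : 'rV[R]_s -> R) (w : 'rV[R]_s) :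
  Dseq js (fun y => g (y + w)) = (fun y => Dseq js g (y + w)).
Proof.
elim: js => [|j js IH] //=; apply: funext => x.
by rewrite /partial IH derive_shift.
Qed.

Lemma Ck_shift s k (g : 'rV[R]_s -> R) (w : 'rV[R]_s) :
  Ck k g -> Ck k (fun y => g (y + w)).
Proof.
move=> gk js js_k; have [cg dg] := gk js js_k; rewrite Dseq_shift; split.
  exact: continuous_shift.
by move=> js_lt j x; apply: derivable_shift; exact: dg.
Qed.

Lemma DseqB s k (js : seq 'I_s) (g1 g2 : 'rV[R]_s -> R) :
  Ck k g1 -> Ck k g2 -> (size js <= k)%N ->
  Dseq js (fun y => g1 y - g2 y) = (fun y => Dseq js g1 y - Dseq js g2 y).
Proof.
move=> g1k g2k; elim: js => [|j js IH] //= js_k; apply: funext => x.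
rewrite IH 1?ltnW // /partial.
have d1 := (g1k js (ltnW js_k)).2 js_k j x.
have d2 := (g2k js (ltnW js_k)).2 js_k j x.
by rewrite -[fun y => _ - _]/(Dseq js g1 - Dseq js g2) deriveB.
Qed.

Lemma CkB s k (g1 g2 : 'rV[R]_s -> R) :
  Ck k g1 -> Ck k g2 -> Ck k (fun y => g1 y - g2 y).
Proof.
move=> g1k g2k js js_k; rewrite (DseqB g1k g2k js_k).
have [c1 d1] := g1k js js_k; have [c2 d2] := g2k js js_k; split.
  by move=> x; apply: continuousB; [exact: c1 | exact: c2].
by move=> js_lt j x; apply: derivableB; [exact: d1 | exact: d2].
Qed.

Lemma Ck_fdiff s k d j (g : 'rV[R]_s -> R) : Ck k g -> Ck k (fdiff d j g).
Proof. by move=> gk; apply: CkB => //; exact: Ck_shift. Qed.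

Lemma Dseq_fdiff s k d j (js : seq 'I_s) (g : 'rV[R]_s -> R) :
  Ck k g -> (size js <= k)%N -> Dseq js (fdiff d j g) = fdiff d j (Dseq js g).
Proof.
move=> gk js_k; rewrite /fdiff (DseqB gk _ js_k) ?Dseq_shift //.
exact: Ck_shift.
Qed.

Lemma fdiffC s d i j (G : 'rV[R]_s -> R) : fdiff d i (fdiff d j G) = fdiff d j (fdiff d i G).
Proof.
apply: funext => y; rewrite /fdiff [y + d *: evec R j + d *: evec R i]addrAC; ring.
Qed.

Lemma fdiff_fdiffs s d j (js : seq 'I_s) (g : 'rV[R]_s -> R) :
  fdiff d j (fdiffs d js g) = fdiffs d js (fdiff d j g).
Proof. by elim: js => [|i js IH] //=; rewrite fdiffC IH. Qed.

Lemma derive_mvt s (G : 'rV[R]_s -> R) (y v : 'rV[R]_s) (d : R) :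
  continuous G -> (forall x, derivable G x v) -> 0 <= d ->
  exists2 c : R, 0 <= c <= d & G (y + d *: v) - G y = d * 'D_v G (y + c *: v).
Proof.
move=> cG dG d0; pose phi t := G (y + t *: v).
have phiE t : (fun h : R => h^-1 *: ((phi \o shift t) (h *: (1 : R)) - phi t)) =
    (fun h : R => h^-1 *: ((G \o shift (y + t *: v)) (h *: v) - G (y + t *: v))).
  apply: funext => h; rewrite /phi /comp /= -[h%:A]/(h * 1) mulr1 scalerDl.
  by rewrite [h *: v + (y + t *: v)]addrCA addrA.
have dphi t : is_derive t (1 : R) phi ('D_v G (y + t *: v)).
  have hd : derivable phi t 1 by rewrite /derivable phiE; exact: dG.
  have -> : 'D_v G (y + t *: v) = 'D_1 phi t by rewrite /derive phiE.
  exact: derivableP.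
have cphi : continuous phi.
  move=> t; apply: continuous_comp; last exact: cG.
  by apply: cvgD; [exact: cvg_cst | exact: scalel_continuous].
have [c c_in phiE'] := MVT_segment d0 (fun x _ => dphi x) (continuous_subspaceT cphi).
by exists c; [move: c_in; rewrite in_itv | move: phiE'; rewrite /phi scale0r addr0 subr0 mulrC].
Qed.

Lemma fdiffs_mvt s k (d : R) (js : seq 'I_s) (g : 'rV[R]_s -> R) :
  0 <= d -> Ck k g -> (size js < k)%N -> forall y : 'rV[R]_s, exists2 z : 'rV[R]_s,
  forall i, `|z ord0 i - y ord0 i| <= (size js)%:R * d &
  fdiffs d js g y = (- d) ^+ size js * Dseq js g z.
Proof.
move=> d0; elim: js g => [|j js IH] g gk js_k y.
  by exists y => [i|]; rewrite ?subrr ?normr0 ?mul0r ?mul1r.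
have js_k' : (size js < k)%N by apply: ltn_trans js_k.
have [z' z'y z'E] := IH (fdiff d j g) (Ck_fdiff d j gk) js_k' y.
have [cD dD] := gk js (ltnW js_k').
have [c /andP[c0 cd] mvt] := derive_mvt z' cD (dD js_k' j) d0.
exists (z' + c *: evec R j) => [i|].
  rewrite /evec !mxE eqxx /= addrAC.
  apply: le_trans (ler_normD _ _) _; rewrite mulrSr mulrDl mul1r lerD //.
  by rewrite normrM ger0_norm //; case: (_ == _); rewrite ?normr1 ?normr0 ?mulr1 ?mulr0.
rewrite /= fdiff_fdiffs z'E (Dseq_fdiff _ _ gk (ltnW js_k')) /fdiff /partial.
by rewrite -[Dseq js g z' - _]opprB mvt exprS; ring.
Qed.

End MeanValue.

Section HaarCoefficient.
Variable R : realType.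

Lemma ind01_affine (a b c m t : R) : 0 < c ->
  ind01 a b (c * t - m) = ind01 ((a + m) / c) ((b + m) / c) t.
Proof.
move=> c0; rewrite /ind01 ler_pdivrMr // ler_pdivlMr //.
by rewrite lerBrDr lerBlDr [t * c]mulrC.
Qed.

Definition cell_lo s (n : nat) (alpha : 'I_s -> int) (j : 'I_s) : R := (alpha j)%:~R / 2 ^+ n.

Definition cell_half (n : nat) : R := (2 ^+ n)^-1 / 2.

Lemma cell_half_gt0 n : 0 < cell_half n.
Proof. by rewrite divr_gt0 // invr_gt0 exprn_gt0. Qed.

Lemma psi_theta_haar_prod s (theta : 'I_s -> bool) n (alpha : 'I_s -> int) (y : 'rV[R]_s) :
  psi_theta theta ((2 : R) ^+ n *: y - rvZ R alpha) =
  haar_prod theta (cell_lo n alpha) (cell_half n) y.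
Proof.
rewrite /psi_theta /haar_prod; apply: eq_bigr => j _.
have h0 : 0 < (2 : R) ^+ n by rewrite exprn_gt0.
rewrite !mxE /psi /haar1 /cell_lo /cell_half; case: (theta j); rewrite !ind01_affine //.
  by congr (ind01 _ _ _ - ind01 _ _ _); field; rewrite gt_eqF.
by congr (ind01 _ _ _); field; rewrite gt_eqF.
Qed.

Lemma haar_coef_box s (theta : 'I_s -> bool) n (alpha : 'I_s -> int) (f : 'rV[R]_s -> R) :
  continuous f ->
  haar_coef theta n alpha f = 2 `^ ((n * s)%:R / 2) *
    box_integral (fdiffs (cell_half n) (theta_seq theta) f)
      (cell_lo n alpha) (haar_hi theta (cell_lo n alpha) (cell_half n)).
Proof.
move=> cf; rewrite /haar_coef -intRn_haar ?ltW ?cell_half_gt0 //.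
by congr (_ * intRn _); apply: funext => y; rewrite psi_theta_haar_prod.
Qed.

Lemma size_theta_seq s (theta : 'I_s -> bool) : size (theta_seq theta) = mabs theta.
Proof.
rewrite /theta_seq /mabs size_filter -sum1_count big_mkcond -big_enum /=.
by apply: eq_bigr => j _; case: (theta j).
Qed.

Lemma mfact_bool s (theta : 'I_s -> bool) : mfact theta = 1%N.
Proof. by rewrite /mfact big1 // => j _; case: (theta j). Qed.

Lemma expr_mabs s (theta : 'I_s -> bool) (x : R) :
  x ^+ mabs theta = \prod_(j < s) (if theta j then x else 1).
Proof. by rewrite /mabs -prodrXr; apply: eq_bigr => j _; case: (theta j). Qed.

Lemma powR_add_half (m l : nat) :
  (2 : R) `^ (m%:R + l%:R / 2) * 2 `^ (l%:R / 2) = 2 ^+ m * 2 ^+ l.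
Proof.
rewrite powRD; last by rewrite pnatr_eq0 implybT.
rewrite -mulrA -powRD; last by rewrite pnatr_eq0 implybT.
by rewrite -splitr !powR_mulrn.
Qed.

Lemma haar_normalization s (theta : 'I_s -> bool) n (lo : 'I_s -> R) :
  let k := mabs theta in
  (-1) ^+ k * 2 ^+ ((n + 2) * k) * 2 ^+ (n * s) * (- cell_half n) ^+ k *
    box_vol lo (haar_hi theta lo (cell_half n)) = 1.
Proof.
have h0 : (2 : R) ^+ n != 0 by rewrite gt_eqF // exprn_gt0.
rewrite /= exprM exprM.
rewrite (_ : (2 : R) ^+ n ^+ s = \prod_(j < s) 2 ^+ n); last by rewrite prodr_const card_ord.
rewrite /box_vol !expr_mabs -!big_split big1 // => j _.
rewrite /haar_hi /haar_width addrAC subrr add0r /cell_half.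
by case: (theta j) => /=; rewrite ?exprD; field.
Qed.

Lemma box_integral_dist_le s (lo hi : 'I_s -> R) (g : 'rV[R]_s -> R) (kappa c M : R) :
  (forall j, lo j <= hi j) -> kappa * box_vol lo hi = 1 -> continuous g ->
  (forall y : 'rV[R]_s, (forall j, lo j <= y ord0 j <= hi j) -> `|g y - c| <= M) ->
  `|kappa * box_integral g lo hi - c| <= M.
Proof.
move=> lohi kappaV cg gM.
have -> : c = kappa * (c * box_vol lo hi) by rewrite mulrCA kappaV mulr1.
rewrite -box_integral_cst // -mulrBr -box_integralB //; last exact: cst_continuous.
have cgc : continuous (fun y => g y - c).
  by move=> x; apply: continuousB (cg x) _; exact: cst_continuous.
rewrite normrM; apply: le_trans (ler_wpM2l (normr_ge0 kappa) (box_integral_le lohi cgc gM)) _.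
by rewrite mulrCA -(ger0_norm (box_vol_ge0 lohi)) -normrM kappaV normr1 mulr1.
Qed.

Definition cell_radius s (n k : nat) (alpha : 'I_s -> int) : R :=
  (\sum_(j < s) `|(alpha j)%:~R : R| + 1 + k%:R) / 2 ^+ n.

Lemma cell_radius_cvg0 s k (alpha : 'I_s -> int) : cell_radius n k alpha @[n --> \oo] --> 0.
Proof.
have half_lt1 : `|(2 : R)^-1| < 1 by rewrite ger0_norm ?invr_ge0 // invf_lt1 ?ltr1n.
apply: cvg_trans (cvg_geometric _ half_lt1); apply: near_eq_cvg; near=> n.
by rewrite /cell_radius /geometric /= exprVn.
Unshelve. all: by end_near.
Qed.

Lemma abs_alpha_le_sum s (alpha : 'I_s -> int) i :
  `|(alpha i)%:~R : R| <= \sum_(j < s) `|(alpha j)%:~R : R|.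
Proof. by rewrite (bigD1 i) //= lerDl sumr_ge0. Qed.

Lemma cell_point_le s (theta : 'I_s -> bool) n (alpha : 'I_s -> int) (y z : 'rV[R]_s) i :
  (forall j, cell_lo n alpha j <= y ord0 j <= haar_hi theta (cell_lo n alpha) (cell_half n) j) ->
  `|z ord0 i - y ord0 i| <= (mabs theta)%:R * cell_half n ->
  `|z ord0 i| <= cell_radius n (mabs theta) alpha.
Proof.
move=> y_in zy; have /andP[lo_y y_hi] := y_in i.
set u : R := (2 ^+ n)^-1; have u0 : 0 < u by rewrite invr_gt0 exprn_gt0.
have hi_le : haar_hi theta (cell_lo n alpha) (cell_half n) i <= cell_lo n alpha i + u.
  by rewrite /haar_hi lerD2l /haar_width /cell_half -/u; case: (theta i); lra.
have lo_abs : `|cell_lo n alpha i| <= (\sum_(j < s) `|(alpha j)%:~R : R|) * u.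
  by rewrite /cell_lo -/u normrM (ger0_norm (ltW u0)) ler_pM2r // abs_alpha_le_sum.
have zy' := ler_normD (z ord0 i - y ord0 i) (y ord0 i); rewrite subrK in zy'.
have yl := ler_normD (y ord0 i - cell_lo n alpha i) (cell_lo n alpha i); rewrite subrK in yl.
rewrite [`|y ord0 i - _|]ger0_norm ?subr_ge0 // in yl; rewrite /cell_half -/u in zy.
have ku : (mabs theta)%:R * (u / 2) <= (mabs theta)%:R * u.
  by apply: ler_wpM2l => //; lra.
rewrite /cell_radius -/u !mulrDl mul1r; lra.
Qed.

Lemma xpt_le s n k (alpha : 'I_s -> int) i : `|xpt R n alpha ord0 i| <= cell_radius n k alpha.
Proof.
rewrite /xpt /cell_radius !mxE normrM ger0_norm ?invr_ge0 ?exprn_ge0 // mulrC.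
rewrite ler_wpM2r ?invr_ge0 ?exprn_ge0 // -addrA.
apply: le_trans (ler_normD _ _) (lerD (abs_alpha_le_sum _ _) _).
by rewrite ger0_norm // ler_wpDr // ler_pdivrMr // mul1r ler1n.
Qed.

Lemma haar_coef_error s (theta : 'I_s -> bool) (f : 'rV[R]_s -> R) (alpha : 'I_s -> int)
    (n : nat) (eps : R) :
  Ck (mabs theta).+1 f ->
  (forall z : 'rV[R]_s, (forall i, `|z ord0 i| <= cell_radius n (mabs theta) alpha) ->
     `|Dtheta theta f z - Dtheta theta f 0| <= eps) ->
  `|(-1) ^+ mabs theta * 2 `^ ((((n + 2) * mabs theta)%N)%:R + (n * s)%:R / 2) *
      haar_coef theta n alpha f - Dtheta theta f (xpt R n alpha)| <= eps + eps.
Proof.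
move=> fk Df_near0; set k := mabs theta.
set d := cell_half n; set lo := cell_lo n alpha; set hi := haar_hi theta lo d.
have cf : continuous f := (fk [::] isT).1.
have d0 : 0 < d := cell_half_gt0 n.
have lohi j : lo j <= hi j by rewrite lerDl haar_width_ge0 // ltW.
have cdiffs : continuous (fdiffs d (theta_seq theta) f) by exact: continuous_fdiffs.
have c0 : (- d) ^+ k != 0 by rewrite expf_neq0 // oppr_eq0 gt_eqF.
rewrite haar_coef_box // mulrA -[_ * 2 `^ _ * 2 `^ _]mulrA powR_add_half mulrA.
rewrite -[box_integral _ _ _](mulVKf c0) -box_integralZ // mulrA.
apply: box_integral_dist_le => //; first exact: haar_normalization.
  exact: continuous_scale.
move=> y y_in; have k_lt : (size (theta_seq theta) < k.+1)%N by rewrite size_theta_seq.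
have [z zy ->] := fdiffs_mvt (ltW d0) fk k_lt y.
rewrite size_theta_seq mulKf //.
apply: le_trans (ler_distD (Dtheta theta f 0) _ _) _.
rewrite [X in _ + X]distrC; apply: lerD; apply: Df_near0 => i; last exact: xpt_le.
by apply: (cell_point_le y_in); rewrite -size_theta_seq.
Qed.

End HaarCoefficient.

Unset Implicit Arguments.

Theorem theorem3p2 (R : realType) (s : nat) (hs : (1 <= s)%N)
  (theta : 'I_s -> bool) (f : 'rV[R]_s -> R)
  (hf : Ck (mabs theta).+1 f) (alpha : 'I_s -> int) :
  (fun n : nat =>
     `| (-1) ^+ mabs theta
          * (2 : R) `^ ((((n + 2) * mabs theta)%N)%:R + (n * s)%:R / 2)
          * haar_coef theta n alpha f
        - Dtheta theta f (xpt R n alpha) / (mfact theta)%:R |) @ \oo --> (0 : R).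
Proof.
rewrite mfact_bool; under eq_fun do rewrite divr1.
have cD : continuous (Dtheta theta f).
  by have [] := hf (theta_seq theta); rewrite ?size_theta_seq.
apply/cvgrPdist_le => eps eps0; have eps20 : 0 < eps / 2 by rewrite divr_gt0.
have [eta eta0 Df_near0] : exists2 eta : R, 0 < eta & forall z : 'rV[R]_s,
    (forall i, `|z ord0 i| < eta) -> `|Dtheta theta f z - Dtheta theta f 0| <= eps / 2.
  have /cvgrPdist_le/(_ _ eps20)/nbhs_ballP[eta eta0 ball_eta] := cD 0.
  exists eta => // z z_eta; rewrite distrC; apply: ball_eta; split => // i' i.
  by rewrite (ord1 i') /ball /= mxE sub0r normrN; exact: z_eta.
have /cvgrPdist_lt/(_ _ eta0) := @cell_radius_cvg0 R s (mabs theta) alpha.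
apply: filterS => n; rewrite sub0r normrN => /(le_lt_trans (ler_norm _)) r_eta.
rewrite sub0r normrN normr_id (splitr eps); apply: haar_coef_error => // z z_r.
by apply: Df_near0 => i; exact: le_lt_trans (z_r i) r_eta.
Qed.
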